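(* Let $P\in\mathcal{N}_2$ via the pair of chain covers $\{\mathcal{C}_1,\mathcal{C}_2\}$. Let $Q\subseteq P$ be a diamond consisting of saturated chains $\bm{a}$ and $\bm{b}$ with common minimum $x$ and common maximum $y$, and suppose that $Q\cup\bm{C}\cup\bm{D}$ is a diamond with bottom chain $\bm{C}$ of length $k$ and top chain $\bm{D}$ of length $l$ in $P$. Suppose $Q$ has Type I with respect to $\{\mathcal{C}_1,\mathcal{C}_2\}$. Then, after possibly interchanging the roles of $\mathcal{C}_1$ and $\mathcal{C}_2$, there is a chain of $\mathcal{C}_1$ containing $(\bm{C}\cup\bm{a})\setminus\{y\}$, a chain of $\mathcal{C}_2$ containing $(\bm{C}\cup\bm{b})\setminus\{y\}$, a chain of $\mathcal{C}_2$ containing $(\bm{a}\cup\bm{D})\setminus\{x\}$, and a chain of $\mathcal{C}_1$ containing $(\bm{b}\cup\bm{D})\setminus\{x\}$. Moreover, $$\max\{|\bm{C}|,|\bm{D}|\} < \min\{|\bm{a}|-2,\ |\bm{b}|-2\}.$$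
   Context: All posets are finite; $|\cdot|$ denotes number of elements. An edge of a poset is a covering relation $x \lessdot y$. A chain cover of a poset $P$ is a set of pairwise disjoint saturated chains whose union is $P$. A labeling of $P$ is a map $\lambda:P\to\mathbb{R}$. For a chain cover $\mathcal{C}$, $\mathcal{C}$-sorting a labeling means: for each chain $\bm{c}\in\mathcal{C}$, permute the labels $\{\lambda(v): v\in \bm{c}\}$ among the elements of $\bm{c}$ so that they are non-decreasing from the minimum of $\bm{c}$ to its maximum. A finite poset $P$ is in $\mathcal{N}_2$ via $\{\mathcal{C}_1,\mathcal{C}_2\}$ if $\{\mathcal{C}_1,\mathcal{C}_2\}$ is an unordered pair of chain covers of $P$ such that (1) for every labeling of $P$ and for $i=1$ and $i=2$, first $\mathcal{C}_i$-sorting and then $\mathcal{C}_{3-i}$-sorting leaves the labels non-decreasing along every chain of $\mathcal{C}_i$; and (2) every edge of $P$ is contained in some chain of $\mathcal{C}_1$ or of $\mathcal{C}_2$. A diamond in a poset is a convex subposet (i.e. $u\le w\le v$ with $u,v$ in it implies $w$ in it) that is the union of two distinct saturated chains which intersect only in a common minimal element and a common maximal element. A diamond with bottom chain of length $k$ and top chain of length $l$ is a convex subposet consisting of a diamond with minimum $x$ and maximum $y$, a chain $\bm{C}=\{w_k\lessdot\cdots\lessdot w_1\}$ of $k$ elements with $w_1\lessdot x$, and a chain $\bm{D}=\{z_1\lessdot\cdots\lessdot z_l\}$ of $l$ elements with $y\lessdot z_1$, with no other elements or relations among these elements than those generated by the stated ones. A diamond with chains $\bm{a},\bm{b}$ (minimum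 $x$, maximum $y$) has Type I with respect to $\{\mathcal{C}_1,\mathcal{C}_2\}$ if, after possibly interchanging $\mathcal{C}_1$ and $\mathcal{C}_2$, there is a chain of $\mathcal{C}_1$ containing $\bm{a}\setminus\{y\}$, a chain of $\mathcal{C}_2$ containing $\bm{b}\setminus\{y\}$, a chain of $\mathcal{C}_1$ containing $\bm{b}\setminus\{x\}$, and a chain of $\mathcal{C}_2$ containing $\bm{a}\setminus\{x\}$. *)

From HB Require Import structures.
From mathcomp Require Import all_boot all_order all_algebra.
From mathcomp Require Import Rstruct.
From Stdlib Require Import Reals.
Set Implicit Arguments. Unset Strict Implicit. Unset Printing Implicit Defensive.
Import Order.TTheory GRing.Theory Num.Theory.

Section Posets.
Variables (disp : Order.disp_t) (T : finPOrderType disp).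
Local Open Scope order_scope.

Definition covers (x y : T) : bool :=
  (x < y) && [forall z, ~~ ((x < z) && (z < y))].

Definition sat_chain (c : {set T}) : bool :=
  [&& c != set0,
      [forall u in c, forall v in c, (u <= v) || (v <= u)] &
      [forall u in c, forall v in c,
         ((u < v) && [forall w in c, ~~ ((u < w) && (w < v))]) ==> covers u v]].

Definition chain_cover (C : {set {set T}}) : bool :=
  partition C [set: T] && [forall c in C, sat_chain c].

Definition is_minof (c : {set T}) (x : T) : bool :=
  (x \in c) && [forall z in c, x <= z].
Definition is_maxof (c : {set T}) (x : T) : bool :=
  (x \in c) && [forall z in c, z <= x].

Definition convex (S : {set T}) : bool :=
  [forall u in S, forall v in S, forall w, ((u <= w) && (w <= v)) ==> (w \in S)].

(* C-sorting a labeling: on each chain c of C, the labels of c are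
   redistributed in non-decreasing order from the minimum to the maximum
   of c: the element x of c with exactly r elements of c below it gets the
   r-th smallest label of c. *)
Definition csort (C : {set {set T}}) (lam : T -> R) : T -> R :=
  fun x => let c := pblock C x in
    nth 0%R (sort (fun u v : R => (u <= v)%O) [seq lam y | y <- enum c])
        #|[set y in c | y < x]|.

Definition nondecr_on (C : {set {set T}}) (lam : T -> R) : Prop :=
  forall c, c \in C -> forall u v, u \in c -> v \in c -> u <= v -> (lam u <= lam v)%R.

Definition N2_via (C1 C2 : {set {set T}}) : Prop :=
  [/\ chain_cover C1, chain_cover C2,
      forall lam : T -> R, nondecr_on C1 (csort C2 (csort C1 lam)),
      forall lam : T -> R, nondecr_on C2 (csort C1 (csort C2 lam)) &
      forall u v, covers u v -> exists2 c, c \in C1 :|: C2 & (u \in c) && (v \in c)].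

Definition diamond (a b : {set T}) (x y : T) : Prop :=
  [/\ sat_chain a && sat_chain b, a != b,
      [&& is_minof a x, is_minof b x, is_maxof a y & is_maxof b y],
      a :&: b = [set x; y] & convex (a :|: b)].

Definition diamond_bt (a b : {set T}) (x y : T) (Cb Dt : {set T}) : Prop :=
  [/\ diamond a b x y, sat_chain Cb && sat_chain Dt,
      exists2 w1, is_maxof Cb w1 & covers w1 x,
      exists2 z1, is_minof Dt z1 & covers y z1 &
      convex (a :|: b :|: Cb :|: Dt)].

Definition in_chain_of (C : {set {set T}}) (S : {set T}) : Prop :=
  exists2 c, c \in C & S \subset c.

Definition typeI_or (C1 C2 : {set {set T}}) (a b : {set T}) (x y : T) : Prop :=
  [/\ in_chain_of C1 (a :\ y), in_chain_of C2 (b :\ y),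
      in_chain_of C1 (b :\ x) & in_chain_of C2 (a :\ x)].

Definition typeI (C1 C2 : {set {set T}}) (a b : {set T}) (x y : T) : Prop :=
  typeI_or C1 C2 a b x y \/ typeI_or C2 C1 a b x y.

End Posets.

(* The N_2 condition is only ever applied to 0/1 labelings.  If S is an up-set
   along the chains of D, then D-sorting the indicator of S changes nothing, and
   C-sorting it puts a 1 at v iff at most rank(v) elements of the C-chain of v
   lie outside S; so the N_2 condition becomes a counting monotonicity along the
   chains of D ([upset_sorting]).  Applied to the up-set generated by the part of
   a C-chain above u, it shows that an edge u <. v of a D-chain that leaves the
   C-chain of v must be bridged by a D-chain ([upset_sorting_link]).  Taking for
   the bridged element the successor of x on a (resp. b), this pushes the chains
   through x of C1 and C2 down the bottom chain, one edge at a time.  Another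
   up-set, built from the predecessor of y on a, has too few elements on the
   C1-chain of y unless |D| < |b| - 2.  The remaining statements follow from the
   symmetries a <-> b, C1 <-> C2 and from order reversal, which exchanges the
   bottom and the top chain. *)

From Stdlib Require Import Reals.
(* Reals must come before MathComp: otherwise [%N] is bound to BinNat's scope. *)
From mathcomp Require Import all_boot all_order all_algebra Rstruct.
From mathcomp Require Import zify.
Set Implicit Arguments. Unset Strict Implicit. Unset Printing Implicit Defensive.
Import Order.TTheory GRing.Theory Num.Theory.

Local Open Scope order_scope.

Section SortTwoValues.
Variables (d : Order.disp_t) (X : orderType d) (lo hi : X).
Hypothesis lo_lt_hi : lo < hi.

Lemma sort_two_values (s : seq X) : all [pred t | (t == lo) || (t == hi)] s ->
  sort <=%O s = nseq (count_mem lo s) lo ++ nseq (count_mem hi s) hi.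
Proof.
have hi_lo : (hi == lo) = false by rewrite gt_eqF.
have sorted_nseq n (t : X) : sorted <=%O (nseq n t).
  by elim: n => [|[|n] IHn] //=; rewrite lexx.
move=> s2; apply: le_sorted_eq; rewrite ?sort_le_sorted ?perm_sort //.
  elim: (count_mem lo s) => [|n IHn] //=.
  rewrite (path_sortedE le_trans) IHn andbT all_cat.
  by apply/andP; split; apply/allP => t /nseqP [-> _]; rewrite ?lexx ?ltW.
elim: s s2 => [|t s IHs] //= /andP [/orP [] /eqP -> /IHs e].
  by rewrite eqxx eq_sym hi_lo perm_cons.
by rewrite eqxx hi_lo !add0n perm_sym (perm_catCA _ [:: hi] _) perm_cons perm_sym.
Qed.

End SortTwoValues.

Lemma count_mem_enum (T : finType) (A B : {set T}) :
  count [in B] (enum A) = #|A :&: B|.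
Proof. by rewrite cardE (perm_size (enum_setI A B)) size_filter. Qed.

Section Chains.
Variables (disp : Order.disp_t) (T : finPOrderType disp).
Implicit Types (C : {set {set T}}) (c S : {set T}) (u v w : T).

Lemma covers_lt u v : covers u v -> u < v.
Proof. by case/andP. Qed.

Lemma covers_gap u v w : covers u v -> (u < w < v) = false.
Proof. by case/andP=> _ /forallP /(_ w) /negbTE. Qed.

Lemma covers_between u v w : covers u v -> u <= w -> w <= v -> (w == u) || (w == v).
Proof.
move=> cuv uw wv; move: (covers_gap w cuv).
by rewrite !lt_def uw wv !andbT (eq_sym v); case: (w == u); case: (w == v).
Qed.

Lemma sat_chain_comparable c u v :
  sat_chain c -> u \in c -> v \in c -> (u <= v) || (v <= u).
Proof. by case/and3P=> _ /forall_inP cmp _ uc; move/forall_inP: (cmp u uc); apply. Qed.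

Lemma sat_chain_covers c u v : sat_chain c -> u \in c -> v \in c -> u < v ->
  (forall w, w \in c -> ~~ (u < w < v)) -> covers u v.
Proof.
case/and3P=> _ _ /forall_inP sat uc vc uv gap.
by move/forall_inP: (sat u uc) => /(_ v vc) /implyP; apply; rewrite uv; apply/forall_inP.
Qed.

Lemma sat_chain_succ c u v : sat_chain c -> u \in c -> v \in c -> u < v ->
  exists2 w, w \in c & covers u w && (w <= v).
Proof.
move=> cc uc vc uv; pose below t := #|[set t' in c | t' < t]|.
have Pv : [&& v \in c, u < v & v <= v] by rewrite vc uv lexx.
have [w /and3P [wc uw wv] wmin] :=
  @arg_minnP _ v [pred t | [&& t \in c, u < t & t <= v]] below Pv.
exists w; rewrite // wv andbT; apply: (sat_chain_covers cc) => // z zc.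
apply/negP => /andP [uz zw].
have := wmin z; rewrite /= zc uz (ltW (lt_le_trans zw wv)) leqNgt => /(_ isT) /negP; apply.
apply: proper_card; apply/properP; split.
  by apply/subsetP => t; rewrite !inE => /andP [-> /lt_trans]; apply.
by exists z; rewrite !inE ?zc ?zw ?ltxx.
Qed.

Section Blocks.
Variables (C : {set {set T}}) (HC : chain_cover C).

Lemma chain_cover_self v : v \in pblock C v.
Proof. by case/andP: HC => /and3P [/eqP covC _ _] _; rewrite mem_pblock covC inE. Qed.

Lemma chain_cover_pblock v : pblock C v \in C.
Proof. by rewrite pblock_mem // -mem_pblock chain_cover_self. Qed.

Lemma chain_cover_same u v : u \in pblock C v -> pblock C u = pblock C v.
Proof. by apply: same_pblock; case/andP: HC => /and3P []. Qed.

Lemma chain_cover_sym u v : u \in pblock C v -> v \in pblock C u.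
Proof. by move=> uv; rewrite (chain_cover_same uv) chain_cover_self. Qed.

Lemma chain_cover_def c v : c \in C -> v \in c -> pblock C v = c.
Proof. by apply: def_pblock; case/andP: HC => /and3P []. Qed.

Lemma chain_cover_sat v : sat_chain (pblock C v).
Proof. by case/andP: HC => _ /forall_inP; apply; apply: chain_cover_pblock. Qed.

Lemma chain_cover_comparable w u v :
  u \in pblock C w -> v \in pblock C w -> (u <= v) || (v <= u).
Proof. exact: sat_chain_comparable (chain_cover_sat w). Qed.

Lemma in_chain_of_pblock S u v :
  in_chain_of C S -> u \in S -> v \in S -> v \in pblock C u.
Proof.
by case=> c cC /subsetP Sc uS vS; rewrite (chain_cover_def cC (Sc u uS)) Sc.
Qed.

End Blocks.

Lemma covers_dual u v : covers (T:=T^d) u v = covers v u.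
Proof.
by congr andb; apply: eq_forallb => w; rewrite andbC.
Qed.

Lemma sat_chain_dual c : sat_chain (T:=T^d) c = sat_chain c.
Proof.
rewrite /sat_chain; congr [&& _, _ & _].
  by apply/forall_inP/forall_inP => cmp u uc; apply/forall_inP => v vc;
     rewrite orbC; move/forall_inP: (cmp u uc); apply.
apply/forall_inP/forall_inP => sat u uc; apply/forall_inP => v vc;
  move/forall_inP: (sat v vc) => /(_ u uc);
  rewrite covers_dual ?ltEdual; congr (_ && _ ==> _);
  by apply: eq_forallb_in => w _; rewrite !ltEdual andbC.
Qed.

Lemma chain_cover_dual C : chain_cover (T:=T^d) C = chain_cover C.
Proof.
by rewrite /chain_cover; congr (_ && _); apply: eq_forallb_in => c _; apply: sat_chain_dual.
Qed.

Lemma convex_dual S : convex (T:=T^d) S = convex S.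
Proof.
apply/forall_inP/forall_inP => cvx u uS; apply/forall_inP => v vS; apply/forallP => w;
  move/forall_inP: (cvx v vS) => /(_ u uS) /forallP /(_ w); by rewrite andbC.
Qed.

Lemma above_ind (P : T -> Prop) :
  (forall u, (forall t, u < t -> P t) -> P u) -> forall u, P u.
Proof.
move=> IH u; have [n] := ubnP #|[set t | u < t]|; elim: n u => // n IHn u above_u.
apply: IH => t ut; apply: IHn; rewrite -ltnS; apply: leq_trans above_u; rewrite ltnS.
apply: proper_card; apply/properP; split.
  by apply/subsetP => w; rewrite !inE; apply: lt_trans.
by exists t; rewrite !inE ?ut ?ltxx.
Qed.

End Chains.

Section ZeroOneLabelings.
Variables (disp : Order.disp_t) (T : finPOrderType disp).
Implicit Types (C D : {set {set T}}) (S : {set T}) (u v w : T).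

Definition chain_rank C v := #|[set w in pblock C v | w < v]|.

Definition indicator S v : R := if v \in S then 1%R else 0%R.

Definition sorted_one C S v := (#|pblock C v :\: S| <= chain_rank C v)%N.

Definition up_closed D S :=
  forall u v, v \in pblock D u -> u <= v -> u \in S -> v \in S.

Definition upset_sorting C D := forall S, up_closed D S ->
  forall u v, v \in pblock D u -> u <= v -> sorted_one C S u -> sorted_one C S v.

Lemma chain_rank_lt C v : chain_cover C -> (chain_rank C v < #|pblock C v|)%N.
Proof.
move=> HC; apply: proper_card; apply/properP; split.
  by apply/subsetP => w; rewrite inE => /andP [].
by exists v; rewrite ?inE ?chain_cover_self ?ltxx.
Qed.

Lemma csort_indicator C S v : chain_cover C ->
  csort C (indicator S) v = if sorted_one C S v then 1%R else 0%R.
Proof.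
move=> HC; have indicator01 y : (indicator S y == 0%R) = (y \in ~: S).
  by rewrite inE /indicator; case: (y \in S); rewrite ?oner_eq0 ?eqxx.
have indicator1 y : (indicator S y == 1%R) = (y \in S).
  by rewrite /indicator; case: (y \in S); rewrite ?eqxx // eq_sym oner_eq0.
rewrite /csort /= (sort_two_values ltr01); last first.
  by apply/allP => _ /mapP [y _ ->]; rewrite /= indicator01 indicator1 inE orNb.
rewrite !count_map (eq_count indicator01) (eq_count indicator1).
rewrite -/(chain_rank C v) !count_mem_enum -setDE.
have cardS := cardsID S (pblock C v); have rank_lt := chain_rank_lt v HC.
rewrite nth_cat size_nseq /sorted_one; case: ltnP => r_z; rewrite nth_nseq.
  by rewrite r_z.
by rewrite ifT //; lia.
Qed.

Lemma card_pblock_split C v : chain_cover C ->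
  (chain_rank C v + #|[set w in pblock C v | v < w]|).+1 = #|pblock C v|.
Proof.
move=> HC; rewrite -(cardsID [set w | w < v] (pblock C v)) -addnS; congr (_ + _).
  by apply: eq_card => w; rewrite !inE andbC.
have -> : pblock C v :\: [set w | w < v] = v |: [set w in pblock C v | v < w].
  apply/setP => w; rewrite !inE andbC; case: (eqVneq w v) => [-> | wv] /=.
    by rewrite chain_cover_self ?ltxx.
  case wc: (w \in pblock C v) => //=.
  case/orP: (chain_cover_comparable HC wc (chain_cover_self HC v)) => h.
    by rewrite lt_neqAle wv h (le_gtF h).
  by rewrite (le_gtF h) lt_neqAle eq_sym wv h.
by rewrite cardsU1 inE ltxx andbF.
Qed.

Lemma eq_csort C (f g : T -> R) : f =1 g -> csort C f =1 csort C g.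
Proof. by move=> fg v; rewrite /csort (eq_map fg). Qed.

Lemma csort_up_closed D S : chain_cover D -> up_closed D S ->
  csort D (indicator S) =1 indicator S.
Proof.
move=> HD Sup v; rewrite csort_indicator // /indicator; congr (if _ then _ else _).
have vv := chain_cover_self HD v.
case vS: (v \in S); [apply: subset_leq_card | apply/negbTE; rewrite -ltnNge].
  apply/subsetP => w; rewrite !inE => /andP [wS wv]; rewrite wv lt_neqAle /=.
  case/orP: (chain_cover_comparable HD wv vv) => [-> | vw].
    by rewrite andbT; apply: contraNneq wS => ->.
  by case/negP: wS; apply: (Sup v w).
have -> : (chain_rank D v).+1 = #|v |: [set w in pblock D v | w < v]|.
  by rewrite cardsU1 inE ltxx andbF.
apply: subset_leq_card; apply/subsetP => w.
rewrite !inE => /orP [/eqP -> | /andP [wv lt_wv]]; first by rewrite vS vv.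
rewrite wv andbT; apply: contraFN vS; apply: (Sup w); last exact: ltW.
exact: chain_cover_sym.
Qed.

Lemma upset_sorting_csort C D : chain_cover C -> chain_cover D ->
  (forall lam, nondecr_on D (csort C (csort D lam))) -> upset_sorting C D.
Proof.
move=> HC HD sortCD S Sup u v vu uv one_u.
have := sortCD (indicator S) _ (chain_cover_pblock HD u) u v (chain_cover_self HD u) vu uv.
rewrite !(eq_csort _ (csort_up_closed HD Sup)) !csort_indicator // one_u.
by case: (sorted_one C S v) => // /RleP; rewrite ler10.
Qed.

Lemma upset_sorting_link C D u v a :
  chain_cover C -> chain_cover D -> upset_sorting C D -> covers u v ->
  u \in pblock D v -> u \notin pblock C v -> a \in pblock C v -> v <= a ->
  exists2 t, t \in pblock C u & [&& u <= t, t <= a & a \in pblock D t].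
Proof.
move=> HC HD sortCD cuv uDv uCv aCv va.
pose S := [set s | [exists t in pblock C u, [&& u <= t, t <= s & s \in pblock D t]]].
have Sup : up_closed D S.
  move=> s s' s's ss'; rewrite !inE => /exists_inP [t tCu /and3P [ut ts sDt]].
  apply/exists_inP; exists t; rewrite // ut (le_trans ts ss') /=.
  by rewrite -(chain_cover_same HD sDt).
have one_u : sorted_one C S u.
  apply: subset_leq_card; apply/subsetP => w; rewrite !inE => /andP [wS wCu].
  rewrite wCu lt_neqAle /=.
  case/orP: (chain_cover_comparable HC wCu (chain_cover_self HC u)) => h.
    rewrite h andbT; apply: contraNneq wS => ->.
    by apply/exists_inP; exists u; rewrite ?chain_cover_self ?lexx.
  by case/negP: wS; apply/exists_inP; exists w; rewrite ?chain_cover_self ?lexx ?h.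
have one_v := sortCD S Sup u v (chain_cover_sym HD uDv) (ltW (covers_lt cuv)) one_u.
have [|aS] := boolP (a \in S); first by rewrite inE => /exists_inP [t]; exists t.
rewrite inE in aS.
move: one_v; rewrite /sorted_one leqNgt => /negP; case.
have -> : (chain_rank C v).+1 = #|a |: [set w in pblock C v | w < v]|.
  by rewrite cardsU1 inE (le_gtF va) andbF.
apply: subset_leq_card; apply/subsetP => w.
rewrite !inE => /orP [/eqP -> | /andP [wCv wv]]; first by rewrite aS aCv.
rewrite wCv andbT; apply/negP => /exists_inP [t tCu /and3P [ut tw wDt]].
have /orP [/eqP tu | /eqP tv] := covers_between cuv ut (ltW (le_lt_trans tw wv)).
  move: tw wv; rewrite tu => uw wv.
  have /orP [/eqP wu | /eqP wv'] := covers_between cuv uw (ltW wv).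
    by move: uCv; rewrite -wu wCv.
  by rewrite wv' ltxx in wv.
by move: (le_lt_trans tw wv); rewrite tv ltxx.
Qed.

End ZeroOneLabelings.

Section SortingDuality.
Variables (disp : Order.disp_t) (T : finPOrderType disp).
Implicit Types (C D : {set {set T}}) (S : {set T}) (u v w : T).

Lemma sorted_one_dual C S v : chain_cover C ->
  sorted_one (T:=T^d) C S v = ~~ sorted_one C (~: S) v.
Proof.
move=> HC; rewrite /sorted_one -ltnNge.
change ((#|pblock C v :\: S| <= #|[set w in pblock C v | (v < w)%O]|)%N =
        (chain_rank C v < #|pblock C v :\: ~: S|)%N).
have := card_pblock_split v HC; have := cardsID S (pblock C v).
by rewrite !setDE setCK => ? ?; apply/idP/idP; lia.
Qed.

Lemma upset_sorting_dual C D : chain_cover C -> chain_cover D ->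
  upset_sorting C D -> upset_sorting (T:=T^d) C D.
Proof.
move=> HC HD sortCD S Sup u v vu vu' one_u; move: one_u.
rewrite !sorted_one_dual //; apply: contra; apply: (sortCD _ _ v u) => //.
- move=> s t ts st; rewrite !inE; apply: contra => tS.
  by apply: (Sup t s) => //; exact: (chain_cover_sym HD ts).
- exact: (chain_cover_sym HD vu).
Qed.

End SortingDuality.

Section Frame.
Variables (disp : Order.disp_t) (T : finPOrderType disp).
Implicit Types (C : {set {set T}}) (a b Cb Dt : {set T}) (x y : T).

(* The hypotheses of the theorem, with the N_2 condition weakened to its 0/1
   form; unlike [N2_via], this is invariant under order reversal. *)
Record typeI_frame (C1 C2 : {set {set T}}) a b x y Cb Dt : Prop := TypeIFrame {
  frame_cover1 : chain_cover C1;
  frame_cover2 : chain_cover C2;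
  frame_sort12 : upset_sorting C1 C2;
  frame_sort21 : upset_sorting C2 C1;
  frame_edges : forall u v, covers u v ->
    exists2 c, c \in C1 :|: C2 & (u \in c) && (v \in c);
  frame_diamond : diamond_bt a b x y Cb Dt;
  frame_typeI : typeI_or C1 C2 a b x y }.

Lemma N2_via_sym (C1 C2 : {set {set T}}) : N2_via C1 C2 -> N2_via C2 C1.
Proof. by case=> cc1 cc2 s12 s21 edges; split=> // u v /edges [c]; rewrite setUC; exists c. Qed.

Lemma typeI_frame_of (C1 C2 : {set {set T}}) a b x y Cb Dt :
  N2_via C1 C2 -> diamond_bt a b x y Cb Dt -> typeI_or C1 C2 a b x y ->
  typeI_frame C1 C2 a b x y Cb Dt.
Proof.
by case=> cc1 cc2 s21 s12 edges HD HI; split=> //; exact: upset_sorting_csort.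
Qed.

Lemma diamond_bt_sym a b x y Cb Dt :
  diamond_bt a b x y Cb Dt -> diamond_bt b a x y Cb Dt.
Proof.
case=> [[sab ab /and4P [xa xb ya yb] cap cvx] sCD below above cvx'].
split=> //; last by rewrite (setUC b).
split; first by rewrite andbC.
- by rewrite eq_sym.
- by apply/and4P.
- by rewrite setIC.
- by rewrite setUC.
Qed.

Lemma typeI_frame_sym (C1 C2 : {set {set T}}) a b x y Cb Dt :
  typeI_frame C1 C2 a b x y Cb Dt -> typeI_frame C2 C1 b a x y Cb Dt.
Proof.
case=> cc1 cc2 s12 s21 edges HD [I1 I2 I3 I4]; split=> //; last exact: diamond_bt_sym.
by move=> u v /edges [c]; rewrite setUC; exists c.
Qed.

Lemma diamond_bt_dual a b x y Cb Dt :
  diamond_bt a b x y Cb Dt -> diamond_bt (T:=T^d) b a y x Dt Cb.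
Proof.
case=> [[/andP [sa sb] ab /and4P [xa xb ya yb] cap cvx] /andP [sC sD]
  [w1 w1C cw1] [z1 z1D cz1] cvx'].
split.
- split; first by rewrite !sat_chain_dual sa sb.
  + by rewrite eq_sym.
  + by apply/and4P.
  + by rewrite setIC cap setUC.
  + by rewrite convex_dual setUC.
- by rewrite !sat_chain_dual sC sD.
- by exists z1; rewrite // covers_dual.
- by exists w1; rewrite // covers_dual.
by rewrite convex_dual (setUC b) -setUA (setUC Dt) setUA.
Qed.

End Frame.

Section FrameDuality.
Variables (disp : Order.disp_t) (T : finPOrderType disp).

Lemma typeI_frame_dual (C1 C2 : {set {set T}}) a b x y Cb Dt :
  typeI_frame C1 C2 a b x y Cb Dt -> typeI_frame (T:=T^d) C1 C2 b a y x Dt Cb.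
Proof.
case=> cc1 cc2 s12 s21 edges HD [I1 I2 I3 I4]; split=> //.
- by rewrite chain_cover_dual.
- by rewrite chain_cover_dual.
- exact: upset_sorting_dual.
- exact: upset_sorting_dual.
- by move=> u v; rewrite covers_dual => /edges [c]; exists c; rewrite // andbC.
- exact: diamond_bt_dual.
Qed.

End FrameDuality.

Section FrameFacts.
Variables (disp : Order.disp_t) (T : finPOrderType disp).
Variables (C1 C2 : {set {set T}}) (a b Cb Dt : {set T}) (x y : T).
Hypothesis HF : typeI_frame C1 C2 a b x y Cb Dt.

Lemma frame_mem : [/\ x \in a, x \in b, y \in a & y \in b].
Proof.
by case: (frame_diamond HF) => [[_ _ /and4P [/andP [? _] /andP [? _] /andP [? _] /andP [? _]]]].
Qed.

Lemma frame_range v : v \in a :|: b -> x <= v <= y.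
Proof.
case: (frame_diamond HF) => [[_ _ /and4P [/andP [_ /forall_inP xa] /andP [_ /forall_inP xb]
  /andP [_ /forall_inP ya] /andP [_ /forall_inP yb]] _ _] _ _ _ _].
by rewrite inE => /orP [va | vb]; apply/andP; split; auto.
Qed.

Lemma frame_cap v : v \in a -> v \in b -> (v == x) || (v == y).
Proof.
case: (frame_diamond HF) => [[_ _ _ cap _] _ _ _ _] va vb.
have : v \in a :&: b by rewrite inE va vb.
by rewrite cap !inE.
Qed.

Lemma frame_hull u v w : u \in a :|: b :|: Cb :|: Dt -> v \in a :|: b :|: Cb :|: Dt ->
  u <= w -> w <= v -> [\/ w \in a, w \in b, w \in Cb | w \in Dt].
Proof.
case: (frame_diamond HF) => _ _ _ _ /forall_inP cvx uH vH uw wv.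
move/forall_inP: (cvx u uH) => /(_ v vH) /forallP /(_ w); rewrite uw wv /= !inE.
by rewrite -!orbA => /or4P.
Qed.

Lemma frame_Cb_lt_x t : t \in Cb -> t < x.
Proof.
case: (frame_diamond HF) => _ _ [w1 /andP [_ /forall_inP w1max] cw1] _ _ tC.
exact: le_lt_trans (w1max t tC) (covers_lt cw1).
Qed.

Lemma frame_Dt_gt_y t : t \in Dt -> y < t.
Proof.
case: (frame_diamond HF) => _ _ _ [z1 /andP [_ /forall_inP z1min] cz1] _ tD.
exact: lt_le_trans (covers_lt cz1) (z1min t tD).
Qed.

Lemma frame_interior : exists2 v, v \in a & (v != x) && (v != y).
Proof.
case: (frame_diamond HF) => [[/andP [sa _] ab _ _ _] _ _ _ _].
have [xa xb ya yb] := frame_mem.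
case: (boolP [exists v in a, (v != x) && (v != y)]) => [/exists_inP // | /exists_inPn a_xy].
have xy_of (A : {set T}) w :
    (forall w, w \in A -> ~~ ((w != x) && (w != y))) -> w \in A -> w \in [set x; y].
  by move=> A_xy /A_xy; rewrite negb_and !negbK !inE.
have [v vb /andP [vx vy]] : exists2 v, v \in b & (v != x) && (v != y).
  apply/exists_inP; apply: contraR ab => /exists_inPn b_xy; apply/eqP/setP => w.
  apply/idP/idP; [move/(xy_of _ _ a_xy) | move/(xy_of _ _ b_xy)]; rewrite !inE => /orP [] /eqP ->;
    by rewrite ?xa ?xb ?ya ?yb.
have /andP [xv vy'] : x <= v <= y by apply: frame_range; rewrite inE vb orbT.
have xv' : x < v by rewrite lt_neqAle eq_sym vx xv.
have vy'' : v < y by rewrite lt_neqAle vy vy'.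
have cxy : covers x y.
  apply: (sat_chain_covers sa xa ya (lt_trans xv' vy'')) => w /(xy_of _ _ a_xy).
  by rewrite !inE => /orP [] /eqP ->; rewrite ltxx ?andbF.
by move: (covers_gap v cxy); rewrite xv' vy''.
Qed.

Lemma frame_x_lt_y : x < y.
Proof.
have [v va /andP [vx vy]] := frame_interior.
have /andP [xv vy'] : x <= v <= y by apply: frame_range; rewrite inE va.
by apply: lt_le_trans vy'; rewrite lt_neqAle eq_sym vx xv.
Qed.

Lemma frame_succ_x : exists2 a1, a1 \in a & covers x a1 && (a1 != y).
Proof.
case: (frame_diamond HF) => [[/andP [sa _] _ _ _ _] _ _ _ _].
have [xa _ ya _] := frame_mem; have [v va /andP [vx vy]] := frame_interior.
have [a1 a1a /andP [ca1 a1y]] := sat_chain_succ sa xa ya frame_x_lt_y.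
exists a1; rewrite // ca1; apply: contraTneq ca1 => ->.
have /andP [xv vy'] : x <= v <= y by apply: frame_range; rewrite inE va.
apply/negP => cxy; move: (covers_gap v cxy).
by rewrite !lt_neqAle eq_sym vx vy xv vy'.
Qed.

Lemma frame_a_in_C1x v : v \in a -> v != y -> v \in pblock C1 x.
Proof.
have [xa _ _ _] := frame_mem; have xy := lt_eqF frame_x_lt_y.
case: (frame_typeI HF) => I1 _ _ _ va vy.
by apply: (in_chain_of_pblock (frame_cover1 HF) I1); rewrite !inE ?xy ?xa ?vy.
Qed.

Lemma frame_b_in_C2x v : v \in b -> v != y -> v \in pblock C2 x.
Proof.
have [_ xb _ _] := frame_mem; have xy := lt_eqF frame_x_lt_y.
case: (frame_typeI HF) => _ I2 _ _ vb vy.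
by apply: (in_chain_of_pblock (frame_cover2 HF) I2); rewrite !inE ?xy ?xb ?vy.
Qed.

Lemma frame_b_in_C1y v : v \in b -> v != x -> v \in pblock C1 y.
Proof.
have [_ _ _ yb] := frame_mem; have yx := gt_eqF frame_x_lt_y.
case: (frame_typeI HF) => _ _ I3 _ vb vx.
by apply: (in_chain_of_pblock (frame_cover1 HF) I3); rewrite !inE ?yx ?yb ?vx.
Qed.

Lemma frame_a_in_C2y v : v \in a -> v != x -> v \in pblock C2 y.
Proof.
have [_ _ ya _] := frame_mem; have yx := gt_eqF frame_x_lt_y.
case: (frame_typeI HF) => _ _ _ I4 va vx.
by apply: (in_chain_of_pblock (frame_cover2 HF) I4); rewrite !inE ?yx ?ya ?vx.
Qed.

End FrameFacts.

Section FrameBlocks.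
Variables (disp : Order.disp_t) (T : finPOrderType disp).
Variables (C1 C2 : {set {set T}}) (a b Cb Dt : {set T}) (x y : T).

Lemma frame_pred_y : typeI_frame C1 C2 a b x y Cb Dt ->
  exists2 am, am \in a & covers am y && (am != x).
Proof.
move=> /typeI_frame_dual /typeI_frame_sym /frame_succ_x [am ama /andP [cam amx]].
by exists am; rewrite // -covers_dual cam.
Qed.

(* The successors of x on a and on b are distinct covers of x, hence incomparable. *)
Lemma frame_blocks_disjoint v : typeI_frame C1 C2 a b x y Cb Dt ->
  v \in pblock C1 x -> v \in pblock C1 y -> False.
Proof.
move=> HF vx vy; have cc1 := frame_cover1 HF.
have [a1 a1a /andP [ca1 a1y]] := frame_succ_x HF.
have [b1 b1b /andP [cb1 b1y]] := frame_succ_x (typeI_frame_sym HF).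
have a1x := frame_a_in_C1x HF a1a a1y.
have b1x : b1 \in pblock C1 x.
  rewrite -(chain_cover_same cc1 vx) (chain_cover_same cc1 vy).
  by rewrite (frame_b_in_C1y HF b1b) // gt_eqF ?(covers_lt cb1).
have succ_eq p q : covers x p -> covers x q -> p <= q -> p = q.
  move=> cp cq pq; case/orP: (covers_between cq (ltW (covers_lt cp)) pq) => /eqP // px.
  by move: (covers_lt cp); rewrite px ltxx.
have a1b1 : a1 = b1.
  case/orP: (chain_cover_comparable cc1 a1x b1x); first exact: succ_eq.
  by move/(succ_eq _ _ cb1 ca1).
move: (frame_cap HF a1a); rewrite a1b1 b1b (negbTE b1y) orbF => /(_ isT) /eqP b1x'.
by move: (covers_lt cb1); rewrite b1x' ltxx.
Qed.

End FrameBlocks.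

Section BottomChain.
Variables (disp : Order.disp_t) (T : finPOrderType disp).
Variables (C1 C2 : {set {set T}}) (a b Cb Dt : {set T}) (x y : T).

Lemma bottom_step u v : typeI_frame C1 C2 a b x y Cb Dt ->
  u \in Cb -> covers u v -> v <= x -> v \in pblock C1 x -> v \in pblock C2 x ->
  u \in pblock C2 v -> (forall t, t \in Cb -> u < t -> t \in pblock C1 x) ->
  u \in pblock C1 x.
Proof.
move=> HF uC cuv vx vA1 vB2 uC2v above; have [cc1 cc2] := (frame_cover1 HF, frame_cover2 HF).
apply/negPn/negP => uA1.
have [a1 a1a /andP [ca1 a1y]] := frame_succ_x HF.
have xa1 := covers_lt ca1.
have a1A1 := frame_a_in_C1x HF a1a a1y.
have uC1v : u \notin pblock C1 v by rewrite (chain_cover_same cc1 vA1).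
have a1C1v : a1 \in pblock C1 v by rewrite (chain_cover_same cc1 vA1).
have [t tC1u /and3P [ut ta1 a1C2t]] :=
  upset_sorting_link cc1 cc2 (frame_sort12 HF) cuv uC2v uC1v a1C1v (le_trans vx (ltW xa1)).
have tA1 : t \notin pblock C1 x.
  apply: contra uA1 => tx.
  by rewrite -(chain_cover_same cc1 tx) (chain_cover_same cc1 tC1u) chain_cover_self.
have [tu | tu] := eqVneq t u.
  apply: (frame_blocks_disjoint (v := a1) (typeI_frame_sym HF)).
    by rewrite -(chain_cover_same cc2 vB2) -(chain_cover_same cc2 uC2v) -tu.
  by rewrite (frame_a_in_C2y HF a1a) // gt_eqF.
have uH : u \in a :|: b :|: Cb :|: Dt by rewrite !inE uC orbT.
have a1H : a1 \in a :|: b :|: Cb :|: Dt by rewrite !inE a1a.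
have ab_A1 : t \in a :|: b -> t \in pblock C1 x.
  move/(frame_range HF) => /andP [xt _].
  by case/orP: (covers_between ca1 xt ta1) => /eqP ->; rewrite ?a1A1 ?chain_cover_self.
have [ta | tb | tC | tD] := frame_hull HF uH a1H ut ta1.
- by move: tA1; rewrite ab_A1 // inE ta.
- by move: tA1; rewrite ab_A1 // inE tb orbT.
- by move: tA1; rewrite above // lt_neqAle eq_sym tu.
have /andP [_ a1y'] : x <= a1 <= y by apply: (frame_range HF); rewrite inE a1a.
by move: (lt_le_trans (frame_Dt_gt_y HF tD) (le_trans ta1 a1y')); rewrite ltxx.
Qed.

End BottomChain.

Section BottomChainBlocks.
Variables (disp : Order.disp_t) (T : finPOrderType disp).
Variables (C1 C2 : {set {set T}}) (a b Cb Dt : {set T}) (x y : T).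

Lemma bottom_chain_blocks : typeI_frame C1 C2 a b x y Cb Dt ->
  forall u, u \in Cb -> (u \in pblock C1 x) && (u \in pblock C2 x).
Proof.
move=> HF; have [cc1 cc2] := (frame_cover1 HF, frame_cover2 HF).
case: (frame_diamond HF) => _ /andP [sCb _] [w1 /andP [w1C /forall_inP w1max] cw1] _ _.
apply: above_ind => u IH uC.
have [v [cuv vx /andP [vA1 vB2]]] :
    exists v, [/\ covers u v, v <= x & (v \in pblock C1 x) && (v \in pblock C2 x)].
  have [-> | uw1] := eqVneq u w1; first by exists x; rewrite lexx !chain_cover_self.
  have uw1' : u < w1 by rewrite lt_neqAle uw1 w1max.
  have [v vC /andP [cuv vw1]] := sat_chain_succ sCb uC w1C uw1'.
  exists v; split; [exact: cuv | exact: le_trans vw1 (ltW (covers_lt cw1)) |].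
  exact: IH (covers_lt cuv) vC.
have IH1 t : t \in Cb -> u < t -> t \in pblock C1 x by move=> tC /IH /(_ tC) /andP [].
have IH2 t : t \in Cb -> u < t -> t \in pblock C2 x by move=> tC /IH /(_ tC) /andP [].
have [c /setUP [cC | cC] /andP [uc vc]] := frame_edges HF cuv.
  have uC1v : u \in pblock C1 v by rewrite (chain_cover_def cc1 cC vc).
  rewrite -(chain_cover_same cc1 vA1) uC1v.
  exact: bottom_step (typeI_frame_sym HF) uC cuv vx vB2 vA1 uC1v IH2.
have uC2v : u \in pblock C2 v by rewrite (chain_cover_def cc2 cC vc).
rewrite -(chain_cover_same cc2 vB2) uC2v andbT.
exact: bottom_step HF uC cuv vx vA1 vB2 uC2v IH1.
Qed.

End BottomChainBlocks.

Section TopBound.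
Variables (disp : Order.disp_t) (T : finPOrderType disp).
Variables (C1 C2 : {set {set T}}) (a b Cb Dt : {set T}) (x y : T).
Hypothesis HF : typeI_frame C1 C2 a b x y Cb Dt.
Hypothesis Dt_blocks : forall z, z \in Dt -> (z \in pblock C1 y) && (z \in pblock C2 y).
Variable am : T.
Hypotheses (ama : am \in a) (cam : covers am y) (amx : am != x).

Let cc1 := frame_cover1 HF.
Let cc2 := frame_cover2 HF.
Let amA1 : am \in pblock C1 x := frame_a_in_C1x HF ama (negbT (lt_eqF (covers_lt cam))).
Let x_le_am : x <= am.
Proof. by have /andP [] : x <= am <= y by apply: (frame_range HF); rewrite inE ama. Qed.
Let in_hull v : v \in a -> v \in a :|: b :|: Cb :|: Dt.
Proof. by move=> va; rewrite !inE va. Qed.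

(* Contains x and the part of C1(x) above am, but meets C1(y) only in interior
   points of b and in points above y outside Dt. *)
Let S := [set s | ((s \in pblock C2 x) && (x <= s)) ||
                  [exists r in pblock C1 x, (am < r) && (r <= s)]].

Lemma top_witness_up_closed : up_closed C2 S.
Proof.
move=> s s' s's ss'; rewrite !inE => /orP [/andP [sB2 xs] | /exists_inP [r rA1 /andP [amr rs]]].
  by rewrite -(chain_cover_same cc2 sB2) s's (le_trans xs ss').
by apply/orP; right; apply/exists_inP; exists r; rewrite // amr (le_trans rs ss').
Qed.

Lemma top_witness_sorted : sorted_one C1 S am.
Proof.
have xam : x < am by rewrite lt_neqAle eq_sym amx x_le_am.
rewrite /sorted_one /chain_rank (chain_cover_same cc1 amA1).
set R := [set w in pblock C1 x | w < am].
have xR : x \in R by rewrite inE chain_cover_self ?xam.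
have amR : am \notin R by rewrite inE ltxx andbF.
apply: (@leq_trans #|(am |: R) :\ x|).
  apply: subset_leq_card; apply/subsetP => w; rewrite in_setD => /andP [wS wA1].
  rewrite in_setD1 in_setU1 inE wA1 /=; apply/andP; split.
    by apply: contraNneq wS => ->; rewrite inE chain_cover_self ?lexx.
  case/orP: (chain_cover_comparable cc1 wA1 amA1) => [|amw]; first by rewrite le_eqVlt.
  have [// | wam] := eqVneq w am.
  case/negP: wS; rewrite inE; apply/orP; right; apply/exists_inP; exists w => //.
  by rewrite lt_neqAle eq_sym wam amw lexx.
by have := cardsD1 x (am |: R); rewrite cardsU1 amR in_setU1 xR orbT /=; lia.
Qed.

Lemma top_witness_y : y \notin S.
Proof.
rewrite inE negb_or; apply/andP; split.
  apply/negP => /andP [yB2 _].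
  exact: frame_blocks_disjoint (typeI_frame_sym HF) yB2 (chain_cover_self cc2 y).
apply/exists_inP => [[r rA1 /andP [amr ry]]].
case/orP: (covers_between cam (ltW amr) ry) => /eqP rE; first by rewrite rE ltxx in amr.
by apply: (frame_blocks_disjoint (v := y) HF); rewrite -?rE // chain_cover_self.
Qed.

Lemma top_witness_below_y w :
  w \in S -> w \in pblock C1 y -> w < y -> w \in b :\: [set x; y].
Proof.
move=> wS wB1 wy.
have wA1 : w \notin pblock C1 x by apply/negP => /(frame_blocks_disjoint HF)/(_ wB1).
move: wS; rewrite inE => /orP [/andP [wB2 xw] | /exists_inP [r rA1 /andP [amr rw]]]; last first.
  case/orP: (covers_between cam (ltW amr) (le_trans rw (ltW wy))) => /eqP rE.
    by rewrite rE ltxx in amr.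
  by move: (le_lt_trans rw wy); rewrite rE ltxx.
have [xa _ ya _] := frame_mem HF.
have [wa | wb | wC | wD] := frame_hull HF (in_hull xa) (in_hull ya) xw (ltW wy).
- by case/negP: wA1; rewrite (frame_a_in_C1x HF wa) // lt_eqF.
- rewrite !inE wb negb_or (lt_eqF wy) !andbT.
  by apply: contraNneq wA1 => ->; rewrite chain_cover_self.
- by move: (lt_le_trans (frame_Cb_lt_x HF wC) xw); rewrite ltxx.
- by move: (lt_trans (frame_Dt_gt_y HF wD) wy); rewrite ltxx.
Qed.

Lemma top_witness_above_y w : w \in S -> y < w -> w \notin Dt.
Proof.
move=> wS yw; apply/negP => wD; case/andP: (Dt_blocks wD) => wB1 wA2.
move: wS; rewrite inE => /orP [/andP [wB2 _] | /exists_inP [r rA1 /andP [amr rw]]].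
  exact: frame_blocks_disjoint (typeI_frame_sym HF) wB2 wA2.
have rB1 : r \notin pblock C1 y by apply/negP; apply: frame_blocks_disjoint HF rA1.
have wH : w \in a :|: b :|: Cb :|: Dt by rewrite !inE wD orbT.
have [ra | rb | rC | rD] := frame_hull HF (in_hull ama) wH (ltW amr) rw.
- have /andP [_ ry] : x <= r <= y by apply: (frame_range HF); rewrite inE ra.
  case/orP: (covers_between cam (ltW amr) ry) => /eqP rE; first by rewrite rE ltxx in amr.
  by case/negP: rB1; rewrite rE chain_cover_self.
- by case/negP: rB1; rewrite (frame_b_in_C1y HF rb) // gt_eqF // (le_lt_trans x_le_am amr).
- by move: (lt_trans (frame_Cb_lt_x HF rC) (le_lt_trans x_le_am amr)); rewrite ltxx.
- by case/andP: (Dt_blocks rD) => rB1' _; rewrite rB1' in rB1.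
Qed.

Lemma top_bound : (#|Dt| < #|b| - 2)%N.
Proof.
rewrite ltnNge; apply/negP => big.
have amA2 : am \in pblock C2 y := frame_a_in_C2y HF ama amx.
have yC2am : y \in pblock C2 am by rewrite (chain_cover_same cc2 amA2) chain_cover_self.
have one_y := frame_sort12 HF top_witness_up_closed yC2am (ltW (covers_lt cam)) top_witness_sorted.
set Q := [set w in pblock C1 y | y < w].
have DtQ : Dt \subset Q.
  by apply/subsetP => z zD; rewrite inE (frame_Dt_gt_y HF zD) andbT; case/andP: (Dt_blocks zD).
have B1S : pblock C1 y :&: S \subset (b :\: [set x; y]) :|: (Q :\: Dt).
  apply/subsetP => w; rewrite in_setI => /andP [wB1 wS].
  have wy : w != y by apply: contraNneq top_witness_y => <-.
  case/orP: (chain_cover_comparable cc1 wB1 (chain_cover_self cc1 y)) => h.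
    by rewrite in_setU top_witness_below_y // lt_neqAle wy h.
  have yw : y < w by rewrite lt_neqAle eq_sym wy h.
  by rewrite in_setU [w \in Q :\: Dt]in_setD [w \in Q]inE wB1 yw top_witness_above_y ?orbT.
have [_ xb _ yb] := frame_mem HF.
have bxy : b :&: [set x; y] = [set x; y].
  by apply/setIidPr/subsetP => w; rewrite !inE => /orP [] /eqP ->.
have card_bxy : #|b :\: [set x; y]| = (#|b| - 2)%N.
  have := cardsID [set x; y] b; rewrite bxy cards2 (lt_eqF (frame_x_lt_y HF)) => <-.
  by rewrite addKn.
have B1S_small : (#|pblock C1 y :&: S| <= #|Q|)%N.
  apply: leq_trans (subset_leq_card B1S) _; apply: leq_trans (leq_card_setU _ _).1 _.
  by rewrite -(cardsID Dt Q) (setIidPr DtQ) card_bxy leq_add2r.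
have := leq_add B1S_small one_y; rewrite cardsID -(card_pblock_split y cc1) -/Q.
by rewrite addnC ltnn.
Qed.

End TopBound.

Lemma typeI_frame_top_bound (disp : Order.disp_t) (T : finPOrderType disp)
    (C1 C2 : {set {set T}}) (a b : {set T}) (x y : T) (Cb Dt : {set T}) :
  typeI_frame C1 C2 a b x y Cb Dt ->
  (forall z, z \in Dt -> (z \in pblock C1 y) && (z \in pblock C2 y)) ->
  (#|Dt| < #|b| - 2)%N.
Proof.
move=> HF Dt_blocks; have [am ama /andP [cam amx]] := frame_pred_y HF.
exact: (top_bound HF Dt_blocks ama cam amx).
Qed.

Lemma typeI_frame_conclusion (disp : Order.disp_t) (T : finPOrderType disp)
    (C1 C2 : {set {set T}}) (a b : {set T}) (x y : T) (Cb Dt : {set T}) :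
  typeI_frame C1 C2 a b x y Cb Dt ->
  [/\ in_chain_of C1 ((Cb :|: a) :\ y), in_chain_of C2 ((Cb :|: b) :\ y),
      in_chain_of C2 ((a :|: Dt) :\ x) & in_chain_of C1 ((b :|: Dt) :\ x)] /\
  (maxn #|Cb| #|Dt| < minn (#|a| - 2) (#|b| - 2))%N.
Proof.
move=> HF; have [cc1 cc2] := (frame_cover1 HF, frame_cover2 HF).
have Cb_blocks := bottom_chain_blocks HF.
have Dt_blocks : forall z, z \in Dt -> (z \in pblock C1 y) && (z \in pblock C2 y).
  exact: bottom_chain_blocks (typeI_frame_dual HF).
have chain_of C v (S : {set T}) : chain_cover C -> {subset S <= pblock C v} -> in_chain_of C S.
  by move=> HC SC; exists (pblock C v); [exact: chain_cover_pblock | apply/subsetP].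
split; [split | ].
- apply: (chain_of _ x _ cc1) => w; rewrite !inE => /andP [wy /orP [/Cb_blocks/andP [] // | wa]].
  exact: (frame_a_in_C1x HF wa wy).
- apply: (chain_of _ x _ cc2) => w; rewrite !inE => /andP [wy /orP [/Cb_blocks/andP [] // | wb]].
  exact: (frame_b_in_C2x HF wb wy).
- apply: (chain_of _ y _ cc2) => w; rewrite !inE => /andP [wx /orP [wa | /Dt_blocks/andP [] //]].
  exact: (frame_a_in_C2y HF wa wx).
- apply: (chain_of _ y _ cc1) => w; rewrite !inE => /andP [wx /orP [wb | /Dt_blocks/andP [] //]].
  exact: (frame_b_in_C1y HF wb wx).
have Dt_b := typeI_frame_top_bound HF Dt_blocks.
have Dt_a : (#|Dt| < #|a| - 2)%N.
  by apply: typeI_frame_top_bound (typeI_frame_sym HF) _ => z /Dt_blocks; rewrite andbC.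
have Cb_a : (#|Cb| < #|a| - 2)%N := typeI_frame_top_bound (typeI_frame_dual HF) Cb_blocks.
have Cb_b : (#|Cb| < #|b| - 2)%N.
  apply: typeI_frame_top_bound (typeI_frame_sym (typeI_frame_dual HF)) _ => z /Cb_blocks.
  by rewrite andbC.
by rewrite leq_min !gtn_max Dt_b Dt_a Cb_a Cb_b.
Qed.

Theorem lemma2p8 (disp : Order.disp_t) (T : finPOrderType disp)
    (C1 C2 : {set {set T}}) (a b : {set T}) (x y : T) (Cb Dt : {set T}) :
  N2_via C1 C2 ->
  diamond_bt a b x y Cb Dt ->
  typeI C1 C2 a b x y ->
  ((exists D1 D2, ((D1, D2) = (C1, C2) \/ (D1, D2) = (C2, C1)) /\
     [/\ in_chain_of D1 ((Cb :|: a) :\ y), in_chain_of D2 ((Cb :|: b) :\ y),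
         in_chain_of D2 ((a :|: Dt) :\ x) & in_chain_of D1 ((b :|: Dt) :\ x)])
   /\ maxn #|Cb| #|Dt| < minn (#|a| - 2) (#|b| - 2))%N.
Proof.
move=> N2 HD [HI | HI].
  have [chains bound] := typeI_frame_conclusion (typeI_frame_of N2 HD HI).
  by split=> //; exists C1, C2; split=> //; left.
have [chains bound] := typeI_frame_conclusion (typeI_frame_of (N2_via_sym N2) HD HI).
by split=> //; exists C2, C1; split=> //; right.
Qed.
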